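(* (ZFC.) Let $F\subseteq\mathsf{Agg}^{\sigma}$ be a set with $|F|\le\mathfrak{c}$. Then the $\sigma$-clone generated by $F$ has cardinality at most $\mathfrak{c}$.
   Context: $\mathfrak{c}=2^{\aleph_0}$; the axiom of choice is assumed. $\omega$ is the first infinite ordinal. For an arity $\alpha$ with $0<\alpha\le\omega$ (a positive integer $n=\{0,\dots,n-1\}$ or $\omega$), an $\alpha$-ary aggregation function is a function $f\colon[0,1]^{\alpha}\to[0,1]$ nondecreasing in each coordinate with $f$ equal to $0$ at the all-zero vector and $1$ at the all-one vector. $\mathsf{Agg}$ is the set of aggregation functions of finite arity, $\mathsf{Agg}^{\omega}$ the set of those of arity $\omega$, and $\mathsf{Agg}^{\sigma}=\mathsf{Agg}\cup\mathsf{Agg}^{\omega}$. For an $\alpha$-ary $f$ and $\beta$-ary functions $g_i$, $i<\alpha$ ($0<\alpha,\beta\le\omega$), the composition $f\circ(g_i:i<\alpha)$ is the $\beta$-ary function $\mathbf{x}\mapsto f((g_i(\mathbf{x}))_{i<\alpha})$. A $\sigma$-clone is a set of functions on $[0,1]$ of arities $\alpha$ with $0<\alpha\le\omega$ that contains all projections $p^{\alpha}_i((x_j)_{j<\alpha})=x_i$ ($i<\alpha$) and is closed under such compositions; the $\sigma$-clone generated by $F$ is the smallest $\sigma$-clone containing $F$. *)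

From Stdlib Require Import Reals.
Open Scope R_scope.

Definition I01 : Type := {x : R | 0 <= x <= 1}.
Definition I01_val (x : I01) : R := proj1_sig x.

Definition zero01 : I01 := exist _ 0 (conj (Rle_refl 0) Rle_0_1).
Definition one01 : I01 := exist _ 1 (conj Rle_0_1 (Rle_refl 1)).

Inductive arity : Type := AFin (n : nat) | AOmega.

Definition valid_arity (a : arity) : Prop :=
  match a with AFin n => (0 < n)%nat | AOmega => True end.

Definition idx (a : arity) : Type :=
  match a with AFin n => {i : nat | (i < n)%nat} | AOmega => nat end.


Definition op : Type := {a : arity & (idx a -> I01) -> I01}.

Definition coord_nondecreasing (a : arity) (f : (idx a -> I01) -> I01) : Prop :=
  forall (x y : idx a -> I01) (i : idx a),
    (forall j, j <> i -> x j = y j) ->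
    I01_val (x i) <= I01_val (y i) ->
    I01_val (f x) <= I01_val (f y).

Definition is_agg (a : arity) (f : (idx a -> I01) -> I01) : Prop :=
  valid_arity a /\ coord_nondecreasing a f /\
  f (fun _ => zero01) = zero01 /\ f (fun _ => one01) = one01.

Definition Agg_sigma (o : op) : Prop := is_agg (projT1 o) (projT2 o).

Definition sigma_clone (C : op -> Prop) : Prop :=
  (forall o, C o -> valid_arity (projT1 o)) /\
  (forall (a : arity), valid_arity a -> forall i : idx a,
      C (existT _ a (fun x => x i))) /\
  (forall (a b : arity) (f : (idx a -> I01) -> I01)
          (g : idx a -> (idx b -> I01) -> I01),
      C (existT _ a f) -> (forall i, C (existT _ b (g i))) ->
      C (existT (fun c => (idx c -> I01) -> I01) b (fun x => f (fun i => g i x)))).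

Definition generated_sigma_clone (F : op -> Prop) (o : op) : Prop :=
  forall C, sigma_clone C -> (forall p, F p -> C p) -> C o.

(* |X| <= c = 2^aleph_0, with the continuum represented by nat -> bool *)
Definition card_le_continuum {T : Type} (X : T -> Prop) : Prop :=
  exists h : {x : T | X x} -> (nat -> bool), forall u v, h u = h v -> u = v.

(** Every member of the generated σ-clone is the value of a well-founded term
    whose inner nodes are labelled by elements of F and whose leaves are
    variables; the branching is countable.  Such a term is determined by the
    function sending each path (a finite sequence of naturals) to the symbol
    found there, i.e. by a function from a countable set into a set of size
    at most c, and there are at most c^ℵ0 = c of those. *)

From Stdlib Require Import PeanoNat FunctionalExtensionality ProofIrrelevance ClassicalEpsilon.
From mathcomp Require Import choice.

Definition le_continuum (T : Type) : Prop :=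
  exists h : T -> nat -> bool, forall u v, h u = h v -> u = v.

Lemma le_continuum_countable_exp (K : countType) {T : Type} (h : T -> K -> bool) :
  (forall u v, h u = h v -> u = v) -> le_continuum T.
Proof.
  intros h_inj.
  exists (fun u n => match unpickle n with Some k => h u k | None => false end).
  intros u v E; apply h_inj; extensionality k.
  pose proof (equal_f E (pickle k)) as Ek; simpl in Ek.
  rewrite pickleK in Ek; exact Ek.
Qed.

Lemma le_continuum_inj {T U : Type} (f : T -> U) :
  (forall u v, f u = f v -> u = v) -> le_continuum U -> le_continuum T.
Proof.
  intros f_inj [h h_inj].
  exists (fun u => h (f u)); auto.
Qed.

Lemma le_continuum_nat : le_continuum nat.
Proof.
  exists Nat.eqb; intros m n E.
  apply Nat.eqb_eq; rewrite E; apply Nat.eqb_refl.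
Qed.

Lemma le_continuum_option {T : Type} : le_continuum T -> le_continuum (option T).
Proof.
  intros [h h_inj].
  apply (le_continuum_countable_exp (option nat)
           (fun (u : option T) (k : option nat) =>
              match u, k with
              | None, _ => match k with None => true | Some _ => false end
              | Some x, None => false
              | Some x, Some n => h x n
              end)).
  intros [x|] [y|] E; pose proof (equal_f E None) as E0; try discriminate E0; auto.
  f_equal; apply h_inj; extensionality n; exact (equal_f E (Some n)).
Qed.

Lemma le_continuum_sum {T U : Type} :
  le_continuum T -> le_continuum U -> le_continuum (T + U).
Proof.
  intros [hT hT_inj] [hU hU_inj].
  apply (le_continuum_countable_exp (option nat)
           (fun (u : T + U) (k : option nat) =>
              match u, k with
              | inl _, None => false
              | inr _, None => true
              | inl x, Some n => hT x n
              | inr y, Some n => hU y n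
              end)).
  intros [x|y] [x'|y'] E; pose proof (equal_f E None) as E0; try discriminate E0;
    f_equal; [apply hT_inj | apply hU_inj]; extensionality n; exact (equal_f E (Some n)).
Qed.

Lemma le_continuum_fun (J : countType) {T : Type} :
  le_continuum T -> le_continuum (J -> T).
Proof.
  intros [h h_inj].
  apply (le_continuum_countable_exp (J * nat)%type
           (fun (g : J -> T) (jn : J * nat) => h (g (fst jn)) (snd jn))).
  intros g g' E; extensionality j; apply h_inj; extensionality n.
  exact (equal_f E (j, n)).
Qed.

Lemma le_continuum_sigT {A : Type} {T : A -> Type} :
  le_continuum A -> (forall a, le_continuum (T a)) -> le_continuum {a : A & T a}.
Proof.
  intros [hA hA_inj] HT.
  pose (hT a := proj1_sig (constructive_indefinite_description _ (HT a))).
  assert (hT_inj : forall a u v, hT a u = hT a v -> u = v)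
    by (intro a; exact (proj2_sig (constructive_indefinite_description _ (HT a)))).
  apply (le_continuum_countable_exp (bool * nat)%type
           (fun (s : {a : A & T a}) (bn : bool * nat) =>
              if fst bn then hA (projT1 s) (snd bn) else hT _ (projT2 s) (snd bn))).
  intros [a t] [a' t'] E; simpl in E.
  assert (a = a') as <-.
  { apply hA_inj; extensionality n; exact (equal_f E (true, n)). }
  f_equal; apply (hT_inj a); extensionality n; exact (equal_f E (false, n)).
Qed.

Definition nat_of_arity (a : arity) : option nat :=
  match a with AFin n => Some n | AOmega => None end.

Lemma le_continuum_arity : le_continuum arity.
Proof.
  apply (le_continuum_inj nat_of_arity); [|exact (le_continuum_option le_continuum_nat)].
  intros [m|] [n|]; simpl; congruence.
Qed.

Definition nat_of_idx (a : arity) : idx a -> nat :=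
  match a return idx a -> nat with
  | AFin n => fun i => proj1_sig i
  | AOmega => fun i => i
  end.

Definition idx_of_nat (a : arity) (n : nat) : option (idx a) :=
  match a return option (idx a) with
  | AFin m => match Compare_dec.lt_dec n m with
              | left lt_n_m => Some (exist _ n lt_n_m)
              | right _ => None
              end
  | AOmega => Some n
  end.

Lemma nat_of_idxK (a : arity) (i : idx a) : idx_of_nat a (nat_of_idx a i) = Some i.
Proof.
  destruct a as [m|]; simpl; [|reflexivity].
  destruct i as [n lt_n_m]; simpl.
  destruct (Compare_dec.lt_dec n m) as [lt_n_m'|]; [|contradiction].
  do 2 f_equal; apply proof_irrelevance.
Qed.

Lemma le_continuum_idx (a : arity) : le_continuum (idx a).
Proof.
  apply (le_continuum_inj (nat_of_idx a)); [|exact le_continuum_nat].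
  intros i j E; apply (f_equal (idx_of_nat a)) in E.
  rewrite !nat_of_idxK in E; congruence.
Qed.

Section Terms.

Variable F : op -> Prop.
Local Open Scope list_scope.

Inductive term (b : arity) : Type :=
| Var : idx b -> term b
| App : forall p : {o : op | F o}, (idx (projT1 (proj1_sig p)) -> term b) -> term b.
Arguments Var {b}.
Arguments App {b}.

Fixpoint eval_term {b} (t : term b) : (idx b -> I01) -> I01 :=
  match t with
  | Var i => fun x => x i
  | App p args => fun x => projT2 (proj1_sig p) (fun j => eval_term (args j) x)
  end.

Fixpoint subst_term {a b} (t : term a) (s : idx a -> term b) : term b :=
  match t with
  | Var i => s i
  | App p args => App p (fun j => subst_term (args j) s)
  end.

Lemma eval_subst_term a b (t : term a) (s : idx a -> term b) (x : idx b -> I01) :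
  eval_term (subst_term t s) x = eval_term t (fun i => eval_term (s i) x).
Proof.
  induction t as [i | p args IH]; simpl; [reflexivity|].
  f_equal; extensionality j; apply IH.
Qed.

Definition term_op (o : op) : Prop :=
  valid_arity (projT1 o) /\ exists t : term (projT1 o), eval_term t = projT2 o.

Lemma sigma_clone_term_op : sigma_clone term_op.
Proof.
  split; [|split].
  - intros o [valid_o _]; exact valid_o.
  - intros a valid_a i; split; [exact valid_a|].
    exists (Var i); reflexivity.
  - intros a b f g [valid_a [t eval_t]] Hg; simpl in *.
    assert (s : forall i, {s : term b | eval_term s = g i})
      by (intro i; apply constructive_indefinite_description, Hg).
    split.
    + destruct a as [n|]; [exact (proj1 (Hg (exist _ 0 valid_a))) | exact (proj1 (Hg 0))].
    + exists (subst_term t (fun i => proj1_sig (s i))).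
      extensionality x; simpl; rewrite eval_subst_term, <- eval_t.
      f_equal; extensionality i; rewrite (proj2_sig (s i)); reflexivity.
Qed.

Lemma generated_sigma_clone_term_op :
  (forall o, F o -> valid_arity (projT1 o)) ->
  forall o, generated_sigma_clone F o -> term_op o.
Proof.
  intros F_valid o Ho; apply Ho; [exact sigma_clone_term_op|].
  intros [a f] Fo; split; [exact (F_valid _ Fo)|].
  exists (App (exist _ (existT _ a f) Fo) Var); reflexivity.
Qed.

Definition symbol (b : arity) : Type := (idx b + {o : op | F o})%type.

Definition head_symbol {b} (t : term b) : symbol b :=
  match t with Var i => inl i | App p _ => inr p end.

Fixpoint symbol_at {b} (t : term b) (path : list nat) : option (symbol b) :=
  match t, path with
  | _, nil => Some (head_symbol t)
  | Var _, _ :: _ => None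
  | App p args, n :: path' =>
      match idx_of_nat _ n with
      | Some j => symbol_at (args j) path'
      | None => None
      end
  end.

Lemma symbol_at_inj b (t1 t2 : term b) : symbol_at t1 = symbol_at t2 -> t1 = t2.
Proof.
  revert t2; induction t1 as [i | p args IH]; intros [i' | q args'] E;
    pose proof (equal_f E nil) as E0; simpl in E0; try discriminate E0.
  - congruence.
  - assert (p = q) as <- by congruence.
    f_equal; extensionality j; apply IH; extensionality path.
    pose proof (equal_f E (nat_of_idx _ j :: path)) as Ej; simpl in Ej.
    rewrite nat_of_idxK in Ej; exact Ej.
Qed.

Lemma le_continuum_term b : le_continuum {o : op | F o} -> le_continuum (term b).
Proof.
  intros F_le_c.
  apply (le_continuum_inj symbol_at); [exact (symbol_at_inj b)|].
  apply (le_continuum_fun (list nat)), le_continuum_option, le_continuum_sum;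
    [exact (le_continuum_idx b) | exact F_le_c].
Qed.

End Terms.

Arguments eval_term {F b}.

Theorem theorem2 (F : op -> Prop) :
  (forall f, F f -> Agg_sigma f) ->
  card_le_continuum F ->
  card_le_continuum (generated_sigma_clone F).
Proof.
  intros F_agg F_le_c.
  assert (F_valid : forall o, F o -> valid_arity (projT1 o))
    by (intros o Fo; exact (proj1 (F_agg o Fo))).
  assert (denoting_term : forall u : {o | generated_sigma_clone F o},
            {t : term F (projT1 (proj1_sig u)) | eval_term t = projT2 (proj1_sig u)}).
  { intros [o Ho]; apply constructive_indefinite_description.
    exact (proj2 (generated_sigma_clone_term_op F F_valid o Ho)). }
  pose (code u := existT (term F) _ (proj1_sig (denoting_term u))).
  assert (codeK : forall u, existT _ (projT1 (code u)) (eval_term (projT2 (code u)))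
                            = proj1_sig u).
  { intros u; unfold code; simpl; rewrite (proj2_sig (denoting_term u)).
    destruct u as [[a f] Ho]; reflexivity. }
  apply (le_continuum_inj code).
  - intros u v E.
    assert (proj1_sig u = proj1_sig v) as Euv by (rewrite <- codeK, <- (codeK v), E; reflexivity).
    destruct u, v; apply subset_eq_compat; exact Euv.
  - apply le_continuum_sigT; [exact le_continuum_arity|].
    intro b; exact (le_continuum_term F b F_le_c).
Qed.
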